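(* Let $A$ be a real square matrix such that $A^n>0$ (all entries strictly positive) for some $n>0$. Let $\lambda$ be its Perron–Frobenius eigenvalue, and let $r>0$ satisfy $\lambda>r>|\mu|$ for every eigenvalue $\mu\neq\lambda$ of $A$. Let $v\in NonN(A)$ with $v\notin\ker(A-\lambda I)$. Then there exist $C>0$ and $N$ such that for every $n>N$ and every vector $w$ with $A^n w=v$ we have $\|w\|_1>C/r^n$.
   Context: For a square matrix $A$ acting on $\mathbb{F}^d$ ($\mathbb{F}=\mathbb{R}$ or $\mathbb{C}$), the non-nilpotent subspace $NonN(A)$ is the direct sum of the generalized eigenspaces of $A$ belonging to nonzero eigenvalues (equivalently, the eventual range $\bigcap_{n} A^n(\mathbb{F}^d)$). The Perron–Frobenius eigenvalue of a matrix with $A^n>0$ for some $n$ is its simple, real, positive eigenvalue of largest modulus. *)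

From HB Require Import structures.
From mathcomp Require Import all_boot all_order all_algebra.
From mathcomp Require Import reals.
From mathcomp Require Import complex.
Set Implicit Arguments. Unset Strict Implicit. Unset Printing Implicit Defensive.
Import Order.TTheory GRing.Theory Num.Theory.
Local Open Scope ring_scope.
Local Open Scope complex_scope.

Section Defs.
Variable R : realType.

Definition cplx_mx (d : nat) (A : 'M[R]_d) : 'M[R[i]]_d :=
  map_mx (fun x : R => x%:C) A.

Definition ceigenvalue (d : nat) (A : 'M[R]_d) (mu : R[i]) : bool :=
  eigenvalue (cplx_mx A) mu.

Definition pos_mx (d : nat) (B : 'M[R]_d) : Prop := forall i j, 0 < B i j.

Definition PF_eigenvalue (d : nat) (A : 'M[R]_d) (lam : R) : Prop :=
  [/\ 0 < lam,
      eigenvalue A lam,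
      mup lam (char_poly A) = 1%N
    & forall mu : R[i], ceigenvalue A mu -> `|mu| <= lam%:C].

Definition NonN (d : nat) (A : 'M[R]_d) (v : 'cV[R]_d) : Prop :=
  forall n : nat, exists u : 'cV[R]_d, A ^+ n *m u = v.

Definition norm1 (d : nat) (w : 'cV[R]_d) : R := \sum_i `|w i 0|.
End Defs.

From HB Require Import structures.
From mathcomp Require Import all_boot all_order all_algebra.
From mathcomp Require Import reals complex.
From mathcomp Require Import ring lra.
Set Implicit Arguments. Unset Strict Implicit. Unset Printing Implicit Defensive.
Import Order.TTheory GRing.Theory Num.Theory.
Local Open Scope ring_scope.
Local Open Scope complex_scope.

(* Since lam is a simple root, char_poly A = s * X^k * (X - lam) with s(lam) != 0.
   A Bezout identity for s and X^k (X - lam) gives a polynomial q with s(A) q(A) = 0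
   and q(A) = 1 on ker s(A).  As v = A^k v0, y := (A - lam) v lies in ker s(A), so
   y = X v with X := q(A) (A - lam).  The roots of s have modulus < r, hence the
   entries of A^n X are O(r^n), and y = A^n X w forces |y|_1 <= c r^n |w|_1. *)

Section GeometricBound.
Variables (F : numFieldType) (n m : nat) (B : 'M[F]_n) (r : F).
Hypothesis r_gt0 : 0 < r.

Definition geometric_bounded (X : 'M[F]_(n, m)) :=
  exists2 K, 0 <= K & forall k i j, `|(B ^+ k *m X) i j| <= K * r ^+ k.

(* With [B^(k+1) X = mu B^k X + B^k (B - mu) X], the constant
   [sum |X i j| + K / (r - |mu|)] works by induction on [k]. *)
Lemma geometric_bounded_XsubC (X : 'M[F]_(n, m)) (mu : F) :
  `|mu| < r -> geometric_bounded ((B - mu%:M) *m X) -> geometric_bounded X.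
Proof.
move=> mu_lt [K K0 HK]; set e := r - `|mu|.
have e_gt0 : 0 < e by rewrite subr_gt0.
set S := \sum_i \sum_j `|X i j|.
have S0 : 0 <= S by apply: sumr_ge0 => i _; apply: sumr_ge0.
have Ke0 : 0 <= K / e by rewrite divr_ge0 // ltW.
exists (S + K / e) => [|k i j]; first exact: addr_ge0.
elim: k i j => [|k IHk] i j.
  rewrite expr0 mulr1 mul1mx ler_wpDr // /S (bigD1 i) //= (bigD1 j) //=.
  by rewrite -addrA ler_wpDr // addr_ge0 ?sumr_ge0 // => l _; apply: sumr_ge0.
have -> : B ^+ k.+1 *m X = mu *: (B ^+ k *m X) + B ^+ k *m ((B - mu%:M) *m X).
  by rewrite mulmxBl mulmxBr mul_scalar_mx -scalemxAr addrC subrK exprSr mulmxA.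
rewrite mxE [X in `|X + _|]mxE.
apply: le_trans (ler_normD _ _) _; rewrite normrM.
apply: le_trans (lerD (ler_wpM2l (normr_ge0 mu) (IHk i j)) (HK k i j)) _.
have -> : `|mu| = r - e by rewrite opprB addrC subrK.
rewrite -subr_ge0 exprS.
have -> : (S + K / e) * (r * r ^+ k) - ((r - e) * ((S + K / e) * r ^+ k) + K * r ^+ k)
    = e * S * r ^+ k by field; exact: lt0r_neq0.
by rewrite !mulr_ge0 ?exprn_ge0 // ltW.
Qed.

End GeometricBound.

Lemma geometric_bounded_prod_XsubC (F : numFieldType) n m (B : 'M[F]_n.+1)
    (X : 'M[F]_(n.+1, m)) (rs : seq F) (r : F) :
  0 < r -> (forall mu, mu \in rs -> `|mu| < r) ->
  horner_mx B (\prod_(mu <- rs) ('X - mu%:P)) *m X = 0 ->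
  geometric_bounded B r X.
Proof.
move=> r_gt0; elim: rs X => [|mu rs IH] X rs_lt.
  rewrite big_nil rmorph1 mul1mx => ->.
  by exists 0 => // k i j; rewrite mulmx0 mxE normr0 mul0r.
rewrite big_cons rmorphM /= (comm_horner_mx2 B ('X - mu%:P)) -mulmxA.
rewrite rmorphB /= horner_mx_X horner_mx_C => hX.
apply: (@geometric_bounded_XsubC _ _ _ _ _ r_gt0 _ mu).
  by apply: rs_lt; rewrite mem_head.
by apply: IH hX => nu nu_rs; apply: rs_lt; rewrite inE nu_rs orbT.
Qed.

Lemma normr_real_complex (R : rcfType) (x : R) : `|x%:C| = `|x|%:C.
Proof. by rewrite normc_def /= expr0n addr0 sqrtr_sqr. Qed.

Lemma geometric_bounded_real (R : rcfType) n m (B : 'M[R]_n.+1)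
    (X : 'M[R]_(n.+1, m)) (s : {poly R}) (r : R) :
  0 < r -> s \is monic ->
  (forall mu : R[i], root (map_poly (real_complex R) s) mu -> `|mu| < r%:C) ->
  horner_mx B s *m X = 0 -> geometric_bounded B r X.
Proof.
move=> r_gt0 s_monic s_roots sX0; pose f := real_complex R.
have [rs /= Es] := closed_field_poly_normal (map_poly f s).
rewrite lead_coef_map (monicP s_monic) rmorph1 scale1r in Es.
have [K K0 HK] : geometric_bounded (map_mx f B) r%:C (map_mx f X).
  apply: (@geometric_bounded_prod_XsubC _ _ _ _ _ rs).
  - by rewrite ltcR.
  - by move=> mu mu_rs; apply: s_roots; rewrite Es root_prod_XsubC.
  - by rewrite -Es -map_horner_mx -map_mxM sX0 map_mx0.
have EK : K = (complex.Re K)%:C by rewrite RRe_real // ger0_real.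
exists (complex.Re K) => [|k i j]; first by rewrite -ler0c -EK.
move: (HK k i j); rewrite -rmorphXn -map_mxM mxE normr_real_complex EK.
by rewrite -rmorphXn -rmorphM lecR.
Qed.

Lemma mup1_factor (F : fieldType) (p : {poly F}) (a : F) :
  p \is monic -> mup a p = 1%N ->
  exists s k, [/\ s \is monic, ~~ root s a,
    coprimep s ('X ^+ k * ('X - a%:P)) & p = s * ('X ^+ k * ('X - a%:P))].
Proof.
move=> p_monic p_mup.
have [m [q q_a Ep]] := multiplicity_XsubC p a; rewrite monic_neq0 //= in q_a.
have m1 : m = 1%N by move: p_mup; rewrite Ep mupMr // mup_XsubCX eqxx.
rewrite m1 expr1 in Ep.
have [k [s s_0 Eq]] := multiplicity_XsubC q 0.
have q_neq0 : q != 0 by apply: contraNneq q_a => ->; rewrite root0.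
rewrite q_neq0 subr0 /= in s_0 Eq.
have s_a : ~~ root s a by apply: contra q_a; rewrite Eq rootM => ->.
exists s, k; split => //.
- by move: p_monic; rewrite Ep Eq -mulrA monicMr // monicMl ?monicXsubC ?monicXn.
- by rewrite coprimepMr coprimep_XsubC s_a andbT coprimep_expr // coprimepX.
- by rewrite Ep Eq mulrA.
Qed.

Lemma coprimep_horner_mx_projector (F : fieldType) n (B : 'M[F]_n.+1)
    (s g : {poly F}) :
  coprimep s g -> horner_mx B (s * g) = 0 ->
  exists q : {poly F}, horner_mx B (s * q) = 0 /\
    forall m (x : 'M_(n.+1, m)), horner_mx B s *m x = 0 -> horner_mx B q *m x = x.
Proof.
move=> /Bezout_eq1_coprimepP[[u1 u2] /= Bezout] sg0.
exists (u2 * g); split; first by rewrite mulrCA rmorphM /= sg0 mulr0.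
move=> m x sx0; rewrite -{2}[x]mul1mx -(horner_mx_C B) polyC1 -Bezout.
by rewrite rmorphD /= mulmxDl [horner_mx B (u1 * s)]rmorphM /= -mulmxA sx0 mulmx0 add0r.
Qed.

Section Norm1.
Variable R : realType.

Lemma norm1_gt0 d (w : 'cV[R]_d) : w != 0 -> 0 < norm1 w.
Proof.
move=> w_neq0; rewrite lt_def sumr_ge0 ?andbT //; apply: contra w_neq0.
move=> /eqP/psumr_eq0P w0; apply/eqP/matrixP => i j.
by rewrite ord1 mxE; apply/normr0_eq0/w0.
Qed.

Lemma norm1_mulmx_le e d (M : 'M[R]_(e, d)) (w : 'cV[R]_d) (c : R) :
  (forall i j, `|M i j| <= c) -> norm1 (M *m w) <= e%:R * c * norm1 w.
Proof.
move=> M_le; apply: (@le_trans _ _ (\sum_(i < e) c * norm1 w)).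
  apply: ler_sum => i _; rewrite mxE /norm1 mulr_sumr.
  apply: le_trans (ler_norm_sum _ _ _) _; apply: ler_sum => j _.
  by rewrite normrM ler_wpM2r.
by rewrite sumr_const card_ord mulr_natl mulrnAl.
Qed.

Lemma norm1_preimage_gt d (A X : 'M[R]_d) (v : 'cV[R]_d) (r : R) :
  0 < r -> comm_mx A X -> X *m v != 0 -> geometric_bounded A r X ->
  exists2 C, 0 < C & forall n w, A ^+ n *m w = v -> C / r ^+ n < norm1 w.
Proof.
move=> r_gt0 AX Xv_neq0 [K K0 HK]; have y_gt0 := norm1_gt0 Xv_neq0.
exists (norm1 (X *m v) / (d%:R * K + 1)) => [|n w Ew].
  by rewrite divr_gt0 // ltr_wpDl // mulr_ge0.
have Ey : X *m v = (A ^+ n *m X) *m w.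
  by rewrite -Ew mulmxA; congr (_ *m _); rewrite !mulmxE; exact/commrX/commr_sym.
have := norm1_mulmx_le w (HK n); rewrite -Ey => y_le.
have rn_gt0 : 0 < r ^+ n by rewrite exprn_gt0.
have w_ge0 : 0 <= norm1 w by apply: sumr_ge0.
have dK_ge0 : 0 <= d%:R * K by rewrite mulr_ge0.
rewrite ltr_pdivrMr // ltr_pdivrMr ?ltr_wpDl //.
rewrite (_ : d%:R * (K * r ^+ n) * norm1 w = d%:R * K * (norm1 w * r ^+ n)) in y_le;
  last by ring.
nra.
Qed.

End Norm1.

Lemma ceigenvalue_factor_root (R : realType) d (A : 'M[R]_d) (s g : {poly R})
    (mu : R[i]) :
  char_poly A = s * g -> root (map_poly (real_complex R) s) mu -> ceigenvalue A mu.
Proof.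
move=> Ep s_mu; rewrite /ceigenvalue eigenvalue_root_char.
by rewrite -map_char_poly Ep rmorphM rootM /= s_mu.
Qed.

Theorem fact2p1 (R : realType) (d : nat) (A : 'M[R]_d)
  (hprim : exists n : nat, (0 < n)%N /\ pos_mx (A ^+ n))
  (lam : R) (hPF : PF_eigenvalue A lam)
  (r : R) (hr0 : 0 < r) (hlr : r < lam)
  (hr : forall mu : R[i], ceigenvalue A mu -> mu != lam%:C -> `|mu| < r%:C)
  (v : 'cV[R]_d) (hv : NonN A v) (hvker : (A - lam%:M) *m v != 0) :
  exists C : R, 0 < C /\ exists N : nat, forall n : nat, (N < n)%N ->
    forall w : 'cV[R]_d, A ^+ n *m w = v -> C / r ^+ n < norm1 w.
Proof.
case: d A v hPF hr hv hvker {hprim} => [|d] A v [_ _ lam_mup _] hr hv hvker.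
  by rewrite (flatmx0 v) mulmx0 eqxx in hvker.
have [s [k [s_monic s_lam s_cop Ep]]] := mup1_factor (char_poly_monic A) lam_mup.
have CH : horner_mx A (s * ('X ^+ k * ('X - lam%:P))) = 0.
  by rewrite -Ep Cayley_Hamilton.
have [q [sq0 q_proj]] := coprimep_horner_mx_projector s_cop CH.
have A_lam : horner_mx A ('X - lam%:P) = A - lam%:M.
  by rewrite rmorphB /= horner_mx_X horner_mx_C.
have s_y : horner_mx A s *m ((A - lam%:M) *m v) = 0.
  have [v0 <-] := hv k.
  have A_k : horner_mx A 'X^k = A ^+ k by rewrite rmorphXn /= horner_mx_X.
  rewrite -A_lam -A_k !mulmxA !mulmxE -!rmorphM mulrAC -mulrA -Ep.
  by rewrite /= Cayley_Hamilton mul0mx.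
have s_roots mu : root (map_poly (real_complex R) s) mu -> `|mu| < r%:C.
  move=> s_mu; apply: hr; first exact: ceigenvalue_factor_root Ep s_mu.
  by apply: contraNneq s_lam => mu_lam; move: s_mu; rewrite mu_lam fmorph_root.
pose X := horner_mx A (q * ('X - lam%:P)).
have Xv : X *m v != 0 by rewrite /X rmorphM /= A_lam -mulmxA q_proj.
have sX : horner_mx A s *m X = 0.
  by rewrite /X mulmxE -rmorphM mulrA rmorphM /= sq0 mul0r.
have [C C_gt0 HC] := norm1_preimage_gt hr0 (comm_mx_horner _ (erefl _)) Xv
  (geometric_bounded_real hr0 s_monic s_roots sX).
by exists C; split => //; exists 0%N => n _; apply: HC.
Qed.
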